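(* Let $L$ be a positive integer, let $\omega_1,\omega_2$ be completely multiplicative complex-valued functions on the positive integers, and let $K$ be an arbitrary complex-valued function on the positive divisors of $L$. For $g\mid L$ define \[ J(g)=\sum_{a\mid g}\sum_{b\mid \frac Lg}\mu(a)\mu(b)\omega_2(a)\omega_1(b)\,K\Big(\frac{bg}{a}\Big). \] Then for every factorization $L=AB$, \[ K(B)=\Big(\prod_{p\mid L}(1-\omega_1(p)\omega_2(p))^{-1}\Big)\sum_{\substack{d\mid A,\ e\mid B\\ (d,e)=1}}\omega_1(d)\omega_2(e)\,J\Big(\frac{Bd}{e}\Big). \]
   Context: $\mu$ is the Möbius function; the product is over primes $p$ dividing $L$. *)

From mathcomp Require Import all_boot all_order all_algebra.
From mathcomp Require Import reals.
From mathcomp.real_closed Require Export complex.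
Set Implicit Arguments. Unset Strict Implicit. Unset Printing Implicit Defensive.
Import Order.TTheory GRing.Theory Num.Theory.
Local Open Scope ring_scope.

Definition mobius (T : pzRingType) (n : nat) : T :=
  if (0 < n)%N && all (fun p => logn p n == 1)%N (primes n)
  then (-1) ^+ size (primes n) else 0.

Definition completely_multiplicative (T : pzRingType) (f : nat -> T) : Prop :=
  f 1%N = 1 /\ forall m n, (0 < m)%N -> (0 < n)%N -> f (m * n)%N = f m * f n.

Definition Jfun (T : pzRingType) (L : nat) (w1 w2 K : nat -> T) (g : nat) : T :=
  \sum_(a <- divisors g) \sum_(b <- divisors (L %/ g))
     mobius T a * mobius T b * w2 a * w1 b * K ((b * g) %/ a)%N.

From mathcomp Require Import all_boot all_order all_algebra.
From mathcomp Require Import reals.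
From mathcomp.real_closed Require Import complex.
From mathcomp Require Import ring zify.
Import Order.TTheory GRing.Theory Num.Theory.
Local Open Scope ring_scope.

(* J factors over the primes dividing L.  At a prime p with p^n || L, and with
   u = w1 p, v = w2 p, it acts on the exponent x of p in its argument as the
   operator f(x) - u f(x+1) - v f(x-1) + uv f(x), a term being dropped when one
   of its shifts would leave [0, n]: mu(p^a) mu(p^b) vanishes unless a, b <= 1.
   Localised at p, the condition (d, e) = 1 confines the exponents (i, j) of p
   in (d, e) to the hook i = 0 or j = 0, and over that hook the sum of u^i v^j
   times the local operator at t + i - j telescopes to (1 - uv) f(t), where
   p^t || B.  Peeling off one prime at a time, by induction on L, gives the
   identity with the product of the factors 1 - w1(p) w2(p) on the other side. *)

Lemma perm_divisorsM {m n} : coprime m n -> (0 < m)%N -> (0 < n)%N ->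
  perm_eq (divisors (m * n)) [seq (d1 * d2)%N | d1 <- divisors m, d2 <- divisors n].
Proof.
move=> cmn m0 n0; apply: uniq_perm; rewrite ?divisors_uniq //.
- have gcd_dvdM a b : (a %| m)%N -> (b %| n)%N -> gcdn (a * b) m = a.
    move=> am bn; rewrite gcdnC Gauss_gcdl; first exact/gcdn_idPr.
    exact: coprime_dvdr bn cmn.
  apply: allpairs_uniq; rewrite ?divisors_uniq //.
  move=> _ _ /allpairsP[[a b] /= [+ + ->]] /allpairsP[[a' b'] /= [+ + ->]].
  rewrite -!dvdn_divisors // => am bn a'm b'n /= eq_ab.
  have eq_a : a = a' by rewrite -(gcd_dvdM a b) // eq_ab gcd_dvdM.
  rewrite -eq_a in eq_ab *; congr (_, _); apply/eqP.
  by rewrite -(eqn_pmul2l (dvdn_gt0 m0 am)) eq_ab.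
- move=> d; rewrite -dvdn_divisors ?muln_gt0 ?m0 //; apply/idP/allpairsP.
  + move=> dmn; exists (gcdn d m, gcdn d n); rewrite -!dvdn_divisors // !dvdn_gcdr.
    split=> //; apply/eqP; rewrite eqn_dvd Gauss_dvd ?dvdn_gcdl //; last first.
      exact: coprime_dvdl (dvdn_gcdr _ _) (coprime_dvdr (dvdn_gcdr _ _) cmn).
    rewrite muln_gcdl !muln_gcdr !dvdn_gcd dmn.
    by rewrite dvdn_mulr // dvdn_mulr // dvdn_mull.
  + by case=> [[a b] /= []]; rewrite -!dvdn_divisors // => am bn ->; apply: dvdn_mul.
Qed.

Lemma big_divisorsM (V : nmodType) m n (F : nat -> V) :
  coprime m n -> (0 < m)%N -> (0 < n)%N ->
  \sum_(d <- divisors (m * n)) F d =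
  \sum_(a <- divisors m) \sum_(b <- divisors n) F (a * b)%N.
Proof. by move=> cmn m0 n0; rewrite (perm_big _ (perm_divisorsM cmn m0 n0)) big_allpairs_dep. Qed.

Lemma perm_divisors_pexp {p} k : prime p ->
  perm_eq (divisors (p ^ k)) [seq (p ^ i)%N | i <- iota 0 k.+1].
Proof.
move=> p_pr; apply: uniq_perm; rewrite ?divisors_uniq //.
  by rewrite map_inj_uniq ?iota_uniq //; apply/expnI/prime_gt1.
move=> d; rewrite -dvdn_divisors ?expn_gt0 ?prime_gt0 //.
by apply/(dvdn_pfactor _ _ p_pr)/mapP => -[i ik ->]; exists i; rewrite ?mem_iota in ik *.
Qed.

Lemma big_divisors_pexpM (V : nmodType) p k m (F : nat -> V) :
  prime p -> coprime p m -> (0 < m)%N ->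
  \sum_(d <- divisors (p ^ k * m)) F d =
  \sum_(0 <= i < k.+1) \sum_(d <- divisors m) F (p ^ i * d)%N.
Proof.
move=> p_pr pm m0; rewrite big_divisorsM ?coprimeXl // ?expn_gt0 ?prime_gt0 //.
by rewrite (perm_big _ (perm_divisors_pexp k p_pr)) big_map.
Qed.

Lemma primes_coprime_disjoint {m n q} :
  coprime m n -> q \in primes m -> q \notin primes n.
Proof.
rewrite !mem_primes => cmn /and3P[q_pr _ qm]; apply/negP => /and3P[_ _ qn].
have : (q %| gcdn m n)%N by rewrite dvdn_gcd qm qn.
by rewrite (eqP cmn) dvdn1 => /eqP q1; rewrite q1 in q_pr.
Qed.

Lemma perm_primesM {m n} : coprime m n -> (0 < m)%N -> (0 < n)%N ->
  perm_eq (primes (m * n)) (primes m ++ primes n).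
Proof.
move=> cmn m0 n0; apply: uniq_perm; rewrite ?primes_uniq //.
  rewrite cat_uniq !primes_uniq andbT /=; apply/hasPn => q qn; apply/negP => qm.
  by move: qn; rewrite (negPf (primes_coprime_disjoint cmn qm)).
by move=> q; rewrite mem_cat primesM.
Qed.

Lemma perm_primes_pexpM p k m : prime p -> coprime p m -> (0 < m)%N -> (0 < k)%N ->
  perm_eq (primes (p ^ k * m)) (p :: primes m).
Proof.
move=> p_pr pm m0 k0; have pk0 : (0 < p ^ k)%N by rewrite expn_gt0 (prime_gt0 p_pr).
have := perm_primesM (coprimeXl k pm) pk0 m0.
by rewrite primesX // (primes_prime p_pr).
Qed.

Lemma coprime_pexpM p i j d e : prime p -> coprime p d -> coprime p e ->
  coprime (p ^ i * d) (p ^ j * e) = ((i == 0%N) || (j == 0%N)) && coprime d e.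
Proof.
move=> p_pr pd pe; rewrite coprimeMl !coprimeMr (coprimeXl i pe).
rewrite [coprime d _]coprime_sym (coprimeXl j pd) /= andbT.
case: i => [|i]; first by rewrite expn0 coprime1n.
case: j => [|j]; first by rewrite expn0 coprimen1.
by rewrite coprime_pexpl // coprime_pexpr // prime_coprime // dvdnn.
Qed.

Lemma divn_pexpM q i j m d : (0 < q)%N -> (0 < d)%N -> (j <= i)%N -> (d %| m)%N ->
  (q ^ i * m %/ (q ^ j * d) = q ^ (i - j) * (m %/ d))%N.
Proof.
move=> q0 d0 ji /dvdnP[c ->]; rewrite mulnK // -{1}(subnKC ji) expnD.
rewrite [X in (X %/ _)%N](_ : _ = q ^ j * d * (q ^ (i - j) * c))%N; last by ring.
by rewrite mulKn // muln_gt0 expn_gt0 q0.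
Qed.

Lemma mobiusM (R : pzRingType) m n : coprime m n -> (0 < m)%N -> (0 < n)%N ->
  mobius R (m * n) = mobius R m * mobius R n.
Proof.
have lognM_coprime a b q : coprime a b -> (0 < a)%N -> (0 < b)%N ->
    q \in primes a -> logn q (a * b) = logn q a.
  move=> cab a0 b0 qa; rewrite lognM // -[RHS]addn0; congr (_ + _)%N.
  by apply/eqP; rewrite -leqn0 leqNgt logn_gt0 (negPf (primes_coprime_disjoint cab qa)).
move=> cmn m0 n0; have mn := perm_primesM cmn m0 n0.
rewrite /mobius muln_gt0 m0 n0 (perm_all _ mn) all_cat (perm_size mn) size_cat /=.
rewrite (eq_in_all (a2 := fun q => logn q m == 1)%N); last first.
  by move=> q qm /=; rewrite lognM_coprime.
rewrite (eq_in_all (s := primes n) (a2 := fun q => logn q n == 1)%N); last first.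
  by move=> q qn /=; rewrite mulnC lognM_coprime // coprime_sym.
by case: all; case: all; rewrite ?exprD ?mulr0 ?mul0r.
Qed.

Lemma mobius_pexp (R : pzRingType) p i : prime p ->
  mobius R (p ^ i) = if i == 0%N then 1 else if i == 1%N then -1 else 0.
Proof.
move=> p_pr; case: i => [|[|i]]; rewrite /mobius ?expn0 ?expr0 //=.
  by rewrite expn1 prime_gt0 // primes_prime //= logn_prime // eqxx expr1.
by rewrite expn_gt0 prime_gt0 // primesX // primes_prime //= pfactorK.
Qed.

Lemma big_mobius_pexp (R : pzRingType) p k (G : nat -> R) : prime p ->
  \sum_(0 <= i < k.+1) mobius R (p ^ i) * G i = G 0%N - (if (0 < k)%N then G 1%N else 0).
Proof.
move=> p_pr; rewrite big_nat_recl // mobius_pexp // mul1r.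
case: k => [|k]; first by rewrite big_geq // subr0 addr0.
rewrite big_nat_recl // mobius_pexp //= mulN1r big1 ?addr0 // => i _.
by rewrite mobius_pexp // mul0r.
Qed.

Lemma cmult_expn {R : pzRingType} {w : nat -> R} p i :
  completely_multiplicative w -> (0 < p)%N -> w (p ^ i)%N = w p ^+ i.
Proof.
move=> [w1 wM] p0; elim: i => [|i IHi]; first by rewrite expn0 w1 expr0.
by rewrite expnS wM ?expn_gt0 ?p0 // IHi exprS.
Qed.

Lemma cmult_pexpM {R : pzRingType} {w : nat -> R} p i a :
  completely_multiplicative w -> (0 < p)%N -> (0 < a)%N ->
  w (p ^ i * a)%N = w p ^+ i * w a.
Proof. by move=> wcm p0 a0; rewrite wcm.2 ?expn_gt0 ?p0 // cmult_expn. Qed.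

Lemma sum_hook (V : nmodType) s t (X : nat -> nat -> V) :
  \sum_(0 <= i < s.+1) \sum_(0 <= j < t.+1) (if (i == 0%N) || (j == 0%N) then X i j else 0)
  = \sum_(0 <= j < t.+1) X 0%N j + \sum_(0 <= i < s) X i.+1 0%N.
Proof.
rewrite big_nat_recl //; congr (_ + _); apply: eq_bigr => i _.
by rewrite big_nat_recl // big1 ?addr0.
Qed.

(* The local factor of J at a prime p with p^n || L, for u = w1 p, v = w2 p. *)
Definition Jloc {R : pzRingType} (u v : R) (n : nat) (f : nat -> R) (x : nat) : R :=
  f x - (if (x < n)%N then u * f x.+1 else 0)
  - (if (0 < x)%N then v * (f x.-1 - (if (x < n)%N then u * f x else 0)) else 0).

Section LocalOperator.

Variable R : comPzRingType.
Implicit Types (u v c : R) (f g : nat -> R).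

Lemma eq_Jloc u v n f g x : f =1 g -> Jloc u v n f x = Jloc u v n g x.
Proof. by move=> fg; rewrite /Jloc !fg. Qed.

Lemma JlocZ u v n c f x : Jloc u v n (fun y => c * f y) x = c * Jloc u v n f x.
Proof. by rewrite /Jloc; case: (x < n)%N; case: (0 < x)%N; ring. Qed.

Lemma Jloc_sum u v n (I : Type) (r : seq I) (P : pred I) (F : I -> nat -> R) x :
  Jloc u v n (fun y => \sum_(i <- r | P i) F i y) x = \sum_(i <- r | P i) Jloc u v n (F i) x.
Proof.
elim: r => [|i r IHr]; first by rewrite /Jloc /= !big_nil; case: (x < n)%N; case: (0 < x)%N; ring.
rewrite [RHS]big_cons -IHr /Jloc /= !big_cons; case: (P i) => //.
by case: (x < n)%N; case: (0 < x)%N; ring.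
Qed.

Lemma Jloc_rev u v n f x : (x <= n)%N ->
  Jloc v u n (fun y => f (n - y)%N) (n - x) = Jloc u v n f x.
Proof.
move=> xn; rewrite /Jloc subKn //.
have -> : (n - x < n)%N = (0 < x)%N by lia.
have -> : (0 < n - x)%N = (x < n)%N by lia.
have down : (0 < x)%N -> (n - (n - x).+1 = x.-1)%N by lia.
have up : (x < n)%N -> (n - (n - x).-1 = x.+1)%N by lia.
by case x0 : (0 < x)%N; case xn' : (x < n)%N; rewrite ?down ?up //; ring.
Qed.

Lemma Jloc_row_sum u v f m k :
  \sum_(0 <= i < k.+1) u ^+ i * Jloc u v (m + k) f (m + i) =
  f m - (if (0 < m)%N then v * f m.-1 else if (0 < k)%N then u * v * f 0%N else 0).
Proof.
elim: k m => [|k IHk] m.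
  by rewrite big_nat1 !addn0 /Jloc ltnn /=; case: (0 < m)%N; ring.
rewrite big_nat_recl // addn0.
under eq_bigr => i _ do rewrite exprS -mulrA !addnS -!addSn.
rewrite -mulr_sumr IHk /Jloc /= addnS ltnS leq_addr expr0 mul1r.
by case: m => [|m] /=; ring.
Qed.

Lemma Jloc_col_sum u v f s t :
  \sum_(0 <= j < t.+1) v ^+ j * Jloc u v (s + t) f (t - j) =
  f t - (if (0 < s)%N then u * f t.+1 else if (0 < t)%N then u * v * f t else 0).
Proof.
have flip j : (j < t.+1)%N -> (s + t - (t - j) = s + j)%N by lia.
have bound j : (t - j <= s + t)%N by lia.
under eq_big_nat => j /andP[_ jt] do rewrite -(Jloc_rev _ _ _ _ _ (bound j)) (flip j jt).
rewrite Jloc_row_sum addKn.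
case: s {flip bound} => [|s] /=; last by rewrite addSn subSn ?leq_addr // addKn.
by rewrite add0n subn0 [v * u]mulrC.
Qed.

Lemma Jloc_hook_sum u v f s t : (0 < s + t)%N ->
  \sum_(0 <= i < s.+1) \sum_(0 <= j < t.+1) (if (i == 0%N) || (j == 0%N) then
      u ^+ i * v ^+ j * Jloc u v (s + t) f (t + i - j) else 0)
  = (1 - u * v) * f t.
Proof.
move=> st0; have := Jloc_row_sum u v f t s; rewrite big_nat_recl // [(t + s)%N]addnC => row.
rewrite sum_hook.
under eq_bigr => j _ do rewrite expr0 mul1r addn0.
under [X in _ + X]eq_bigr => i _ do rewrite mulr1 subn0.
rewrite Jloc_col_sum -(addKr (u ^+ 0 * Jloc u v (s + t) f (t + 0)) (\sum_(0 <= i < s) _)) row.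
rewrite /Jloc addn0 expr0 mul1r.
case: s st0 {row} => [|s] /=.
  by rewrite add0n ltnn => ->; ring.
by move=> _; rewrite addSn ltnS leq_addl; case: t => [|t] /=; ring.
Qed.

End LocalOperator.

Lemma Jfun_pexpM (R : comPzRingType) (w1 w2 K : nat -> R) p n M x g :
  completely_multiplicative w1 -> completely_multiplicative w2 ->
  prime p -> coprime p M -> (0 < M)%N -> (g %| M)%N -> (x <= n)%N ->
  Jfun (p ^ n * M)%N w1 w2 K (p ^ x * g)%N =
  Jloc (w1 p) (w2 p) n (fun y => Jfun M w1 w2 (fun h => K (p ^ y * h)%N) g) x.
Proof.
move=> w1cm w2cm p_pr pM M0 gM xn; have p0 := prime_gt0 p_pr.
have g0 : (0 < g)%N := dvdn_gt0 M0 gM.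
have pg : coprime p g := coprime_dvdr gM pM.
have Mg0 : (0 < M %/ g)%N by rewrite divn_gt0 // dvdn_leq.
have pMg : coprime p (M %/ g) := coprime_dvdr (dvdn_div gM) pM.
set F := fun y => _.
transitivity (\sum_(0 <= al < x.+1) mobius R (p ^ al) * \sum_(0 <= be < (n - x).+1)
    mobius R (p ^ be) * (w2 p ^+ al * w1 p ^+ be * F (x + be - al)%N)).
  rewrite /Jfun divn_pexpM // big_divisors_pexpM //.
  apply: eq_big_nat => al /andP[_ alx].
  rewrite mulr_sumr; under [RHS]eq_bigr => be _ do rewrite /F /Jfun !mulr_sumr.
  rewrite [RHS]exchange_big /=; apply: eq_big_seq => a; rewrite -dvdn_divisors // => ag.
  have a0 : (0 < a)%N := dvdn_gt0 g0 ag.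
  rewrite big_divisors_pexpM //; apply: eq_bigr => be _.
  rewrite !mulr_sumr; apply: eq_big_seq => b; rewrite -dvdn_divisors // => bMg.
  have b0 : (0 < b)%N := dvdn_gt0 Mg0 bMg.
  rewrite !mobiusM ?coprimeXl ?expn_gt0 ?p0 ?(coprime_dvdr ag) ?(coprime_dvdr bMg) //.
  rewrite (cmult_pexpM _ _ _ w1cm) // (cmult_pexpM _ _ _ w2cm) //.
  rewrite (_ : (p ^ be * b * (p ^ x * g) = p ^ (x + be) * (b * g))%N); last first.
    by rewrite expnD; ring.
  by rewrite divn_pexpM ?dvdn_mull ?(leq_trans _ (leq_addr _ _)) //; ring.
rewrite big_mobius_pexp // !big_mobius_pexp // subn_gt0 /Jloc /F !addn0 !subn0 addnK.
by case: (0 < x)%N; case: (x < n)%N; rewrite /= ?expr0 ?expr1 ?addn1 ?subn1; ring.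
Qed.

Definition Jinv_sum {R : pzRingType} (w1 w2 K : nat -> R) (A B : nat) : R :=
  \sum_(d <- divisors A) \sum_(e <- divisors B | coprime d e)
     w1 d * w2 e * Jfun (A * B) w1 w2 K (B * d %/ e)%N.

Lemma Jloc_Jinv_sum (R : comPzRingType) (u v : R) n (w1 w2 : nat -> R) K A B x :
  Jloc u v n (fun y => Jinv_sum w1 w2 (K y) A B) x =
  \sum_(d <- divisors A) \sum_(e <- divisors B | coprime d e)
     w1 d * w2 e * Jloc u v n (fun y => Jfun (A * B) w1 w2 (K y) (B * d %/ e)%N) x.
Proof.
rewrite Jloc_sum; apply: eq_bigr => d _; rewrite Jloc_sum.
by apply: eq_bigr => e _; rewrite JlocZ.
Qed.

Lemma Jinv_sum_pexpM (R : comPzRingType) (w1 w2 K : nat -> R) p s t A B :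
  completely_multiplicative w1 -> completely_multiplicative w2 ->
  prime p -> coprime p A -> coprime p B -> (0 < A)%N -> (0 < B)%N ->
  Jinv_sum w1 w2 K (p ^ s * A)%N (p ^ t * B)%N =
  \sum_(0 <= i < s.+1) \sum_(0 <= j < t.+1) (if (i == 0%N) || (j == 0%N) then
     w1 p ^+ i * w2 p ^+ j * Jloc (w1 p) (w2 p) (s + t)
       (fun y => Jinv_sum w1 w2 (fun h => K (p ^ y * h)%N) A B) (t + i - j)
   else 0).
Proof.
move=> w1cm w2cm p_pr pA pB A0 B0; have p0 := prime_gt0 p_pr.
have AB0 : (0 < A * B)%N by rewrite muln_gt0 A0.
rewrite /Jinv_sum (_ : (p ^ s * A * (p ^ t * B) = p ^ (s + t) * (A * B))%N); last first.
  by rewrite expnD; ring.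
under eq_bigr => d _ do rewrite big_mkcond /=.
rewrite big_divisors_pexpM //.
under eq_bigr => i _ do under eq_bigr => d _ do rewrite big_divisors_pexpM //.
under eq_bigr => i _ do rewrite exchange_big /=.
apply: eq_big_nat => i /andP[_ ilt]; apply: eq_big_nat => j /andP[_ jlt].
rewrite Jloc_Jinv_sum.
have coprime_div d e : (d %| A)%N -> (e %| B)%N ->
    coprime (p ^ i * d) (p ^ j * e) = ((i == 0%N) || (j == 0%N)) && coprime d e.
  by move=> dA eB; exact: coprime_pexpM p_pr (coprime_dvdr dA pA) (coprime_dvdr eB pB).
case: ifP => hook; last first.
  rewrite big1_seq // => d /andP[_]; rewrite -dvdn_divisors // => dA.
  by rewrite big1_seq // => e /andP[_]; rewrite -dvdn_divisors // => eB; rewrite coprime_div ?hook.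
have jti : (j <= t + i)%N by case/orP: hook => /eqP ->; lia.
rewrite mulr_sumr; apply: eq_big_seq => d; rewrite -dvdn_divisors // => dA.
rewrite mulr_sumr [RHS]big_mkcond; apply: eq_big_seq => e; rewrite -dvdn_divisors // => eB.
rewrite coprime_div // hook /=; case: ifP => // _.
have [d0 e0] : (0 < d)%N /\ (0 < e)%N by rewrite (dvdn_gt0 A0) ?(dvdn_gt0 B0).
rewrite (cmult_pexpM _ _ _ w1cm) // (cmult_pexpM _ _ _ w2cm) //.
rewrite (_ : (p ^ t * B * (p ^ i * d) = p ^ (t + i) * (B * d))%N); last first.
  by rewrite expnD; ring.
rewrite divn_pexpM ?dvdn_mulr // Jfun_pexpM //; first by ring.
- by rewrite coprimeMr pA.
- by rewrite -divn_mulAC // mulnC dvdn_mul ?dvdn_div.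
- by lia.
Qed.

Lemma Jinv_sum1 (R : pzRingType) (w1 w2 K : nat -> R) :
  completely_multiplicative w1 -> completely_multiplicative w2 ->
  Jinv_sum w1 w2 K 1 1 = K 1%N.
Proof.
move=> w1cm w2cm; have divisors1 : divisors 1 = [:: 1%N] by [].
have mobius1 : mobius R 1 = 1 by rewrite /mobius /= expr0.
rewrite /Jinv_sum divisors1 big_seq1 big_cons coprime1n big_nil addr0 /Jfun.
rewrite !(mul1n, divn1) divisors1 !big_seq1 mobius1 w1cm.1 w2cm.1.
by rewrite !mul1r.
Qed.

Lemma Jinv_sum_lift (R : comPzRingType) (c : R) (w1 w2 : nat -> R) p s t A B :
  completely_multiplicative w1 -> completely_multiplicative w2 ->
  prime p -> coprime p A -> coprime p B -> (0 < A)%N -> (0 < B)%N -> (0 < s + t)%N ->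
  (forall K, Jinv_sum w1 w2 K A B = c * K B) ->
  forall K, Jinv_sum w1 w2 K (p ^ s * A)%N (p ^ t * B)%N =
            (1 - w1 p * w2 p) * c * K (p ^ t * B)%N.
Proof.
move=> w1cm w2cm p_pr pA pB A0 B0 st0 IH K; rewrite Jinv_sum_pexpM //.
under eq_bigr => i _ do under eq_bigr => j _ do under eq_Jloc => y do rewrite IH.
by rewrite Jloc_hook_sum // mulrA.
Qed.

Lemma Jinv_sumE (R : comPzRingType) (w1 w2 K : nat -> R) A B :
  completely_multiplicative w1 -> completely_multiplicative w2 -> (0 < A)%N -> (0 < B)%N ->
  Jinv_sum w1 w2 K A B = (\prod_(q <- primes (A * B)) (1 - w1 q * w2 q)) * K B.
Proof.
move=> w1cm w2cm; move eL: (A * B)%N => L.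
elim/ltn_ind: L => L IHL in K A B eL *; move=> A0 B0.
have [L1 | L_gt1] := leqP L 1.
  have : (A * B == 1)%N by rewrite eL eqn_leq L1 -eL muln_gt0 A0.
  by rewrite muln_eq1 => /andP[/eqP A1 /eqP B1]; subst; rewrite Jinv_sum1 // big_nil mul1r.
have p_pr : prime (pdiv L) := pdiv_prime L_gt1; set p := pdiv L in p_pr.
have [A' pA' eA] := pfactor_coprime p_pr A0.
have [B' pB' eB] := pfactor_coprime p_pr B0.
move: (logn p A) (logn p B) eA eB => s t eA eB.
rewrite mulnC in eA; rewrite mulnC in eB; subst A B.
have [A'0 B'0] : (0 < A')%N /\ (0 < B')%N.
  by move: A0 B0; rewrite !muln_gt0 => /andP[_ ->] /andP[_ ->].
have eLM : L = (p ^ (s + t) * (A' * B'))%N by rewrite -eL expnD; ring.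
have st0 : (0 < s + t)%N.
  have pL : (p %| L)%N := pdiv_dvd L.
  apply: contraLR pL; rewrite -leqNgt leqn0 addn_eq0 => /andP[/eqP s0 /eqP t0].
  by rewrite eLM s0 t0 mul1n -prime_coprime // coprimeMr pA' pB'.
have ltL : (A' * B' < L)%N.
  have p_gt1 := prime_gt1 p_pr.
  by rewrite eLM ltn_Pmull ?muln_gt0 ?A'0 // -(expn0 p) ltn_exp2l.
rewrite (Jinv_sum_lift _ (\prod_(q <- primes (A' * B')) (1 - w1 q * w2 q))) //; last first.
  by move=> K'; apply: (IHL _ ltL K' A' B' erefl A'0 B'0).
rewrite eLM (perm_big _ (perm_primes_pexpM _ _ _ p_pr _ _ st0)) ?coprimeMr ?pA' ?muln_gt0 ?A'0 //.
by rewrite big_cons.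
Qed.

Theorem lemma7p2 (R : realType) (L : nat) (w1 w2 K : nat -> R[i])
  (hL : (0 < L)%N)
  (hw1 : completely_multiplicative w1) (hw2 : completely_multiplicative w2)
  (hnz : forall p : nat, p \in primes L -> 1 - w1 p * w2 p != 0)
  (A B : nat) (hAB : L = (A * B)%N) :
  K B =
  (\prod_(p <- primes L) (1 - w1 p * w2 p)^-1) *
  \sum_(d <- divisors A) \sum_(e <- divisors B | coprime d e)
     w1 d * w2 e * Jfun L w1 w2 K ((B * d) %/ e)%N.
Proof.
have [A0 B0] : (0 < A)%N /\ (0 < B)%N by apply/andP; rewrite -muln_gt0 -hAB.
subst L; rewrite -/(Jinv_sum w1 w2 K A B) Jinv_sumE // mulrA -big_split /=.
by rewrite big1_seq ?mul1r // => q /andP[_ qAB]; rewrite mulVf ?hnz.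
Qed.
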